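(* Let $a_{4,0},a_{2,2},a_{0,4}\geqslant0$ with $a_{4,0}+a_{2,2}>0$, $a_{2,2}+a_{0,4}>0$, let $t\in\mathbb{R}$ and $W_t(x,y)=e^{-(a_{4,0}x^4+a_{2,2}x^2y^2+a_{0,4}y^4)+t(x^2+y^2)}$. Let $\{\mathbb{Q}_n(t)\}_{n\geqslant0}$ be the monic orthogonal polynomial system for $W_t$, with $H_n(t)$ and $E_{n,i}(t)$ as in the context. Then for $n\geqslant0$, $$\dot H_n(t)=V_{n+1}(t)H_n(t),$$ where $V_{n+1}(t)=L_{n,1}E_{n+1,1}(t)+L_{n,2}E_{n+1,2}(t)+E_{n,1}(t)L_{n-1,1}+E_{n,2}(t)L_{n-1,2}$ and the dot denotes derivative with respect to $t$.
   Context: $\mathbb{X}_n=(x^n,x^{n-1}y,\dots,y^n)^T$. $L_{n,1}=(I_{n+1}\,|\,0)$ and $L_{n,2}=(0\,|\,I_{n+1})$ are $(n+1)\times(n+2)$ matrices. Inner product $(f,g)_t=\iint_{\mathbb{R}^2}fgW_t\,dx\,dy$, applied entrywise to vectors. The monic orthogonal polynomial system is the sequence of column vectors $\mathbb{Q}_n(t)=\mathbb{X}_n+(\text{vector of polynomials of total degree}<n)$, coefficients depending on $t$, with $(\mathbb{Q}_n(t),\mathbb{Q}_m(t)^T)_t=0$ for $m\neq n$ and $H_n(t):=(\mathbb{Q}_n(t),\mathbb{Q}_n(t)^T)_t$ symmetric positive definite. It satisfies, for $n\geqslant0$, $x\mathbb{Q}_n(t)=L_{n,1}\mathbb{Q}_{n+1}(t)+E_{n,1}(t)\mathbb{Q}_{n-1}(t)$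 and $y\mathbb{Q}_n(t)=L_{n,2}\mathbb{Q}_{n+1}(t)+E_{n,2}(t)\mathbb{Q}_{n-1}(t)$, with $\mathbb{Q}_{-1}=0$, $\mathbb{Q}_0=1$, $E_{n,i}(t)$ of size $(n+1)\times n$ (the terms with $E_{0,i}$ are zero). *)

From HB Require Import structures.
From mathcomp Require Import all_boot all_order all_algebra.
From mathcomp Require Import all_classical all_reals all_analysis.
Set Implicit Arguments. Unset Strict Implicit. Unset Printing Implicit Defensive.
Import Order.TTheory GRing.Theory Num.Theory.
Local Open Scope ring_scope.

Section Defs.
Variable R : realType.

Definition mu2 := ((@lebesgue_measure R) \x (@lebesgue_measure R))%E.

Definition Wt (a40 a22 a04 t : R) (x y : R) : R :=
  expR (- (a40 * x ^+ 4 + a22 * x ^+ 2 * y ^+ 2 + a04 * y ^+ 4)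
        + t * (x ^+ 2 + y ^+ 2)).

Definition ip (w f g : R -> R -> R) : R :=
  Rintegral mu2 setT (fun z : R * R => f z.1 z.2 * g z.1 z.2 * w z.1 z.2).
Definition ip_ok (w f g : R -> R -> R) : Prop :=
  mu2.-integrable setT (fun z : R * R => (f z.1 z.2 * g z.1 z.2 * w z.1 z.2)%:E).

Definition gram (m n : nat) (w : R -> R -> R)
    (u : R -> R -> 'cV[R]_m) (v : R -> R -> 'cV[R]_n) : 'M[R]_(m, n) :=
  \matrix_(i, j) ip w (fun x y => u x y i 0) (fun x y => v x y j 0).

(* q = X_n + (vector of polynomials of total degree < n) *)
Definition monic_vec (n : nat) (q : R -> R -> 'cV[R]_n.+1) : Prop :=
  exists c : 'I_n.+1 -> nat -> nat -> R, forall (x y : R) (k : 'I_n.+1),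
    q x y k 0 = x ^+ (n - k) * y ^+ k
                + \sum_(i < n) \sum_(j < n - i) c k i j * x ^+ i * y ^+ j.

Definition posdef (n : nat) (H : 'M[R]_n) : Prop :=
  forall v : 'cV[R]_n, v != 0 -> 0 < (v^T *m H *m v) 0 0.

Definition is_MOPS (w : R -> R -> R) (Q : forall n, R -> R -> 'cV[R]_n.+1) : Prop :=
  [/\ (forall n, monic_vec (Q n)),
      (forall m n (i : 'I_m.+1) (j : 'I_n.+1),
          ip_ok w (fun x y => Q m x y i 0) (fun x y => Q n x y j 0)),
      (forall m n, m <> n -> gram w (Q m) (Q n) = 0) &
      (forall n, (gram w (Q n) (Q n))^T = gram w (Q n) (Q n)
                 /\ posdef (gram w (Q n) (Q n)))].

(* Q_{n-1}, with Q_{-1} = 0 *)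
Definition Qprev (Q : forall n, R -> R -> 'cV[R]_n.+1) (n : nat) (x y : R)
  : 'cV[R]_n :=
  match n return 'cV[R]_n with 0 => 0 | m.+1 => Q m x y end.

(* L1 m = (I_m | 0), L2 m = (0 | I_m), both m x (m+1);
   so L_{n,i} = Li n.+1 and L_{n-1,i} = Li n *)
Definition L1 (m : nat) : 'M[R]_(m, m.+1) :=
  \matrix_(i, j) (nat_of_ord j == nat_of_ord i)%:R.
Definition L2 (m : nat) : 'M[R]_(m, m.+1) :=
  \matrix_(i, j) (nat_of_ord j == (nat_of_ord i).+1)%:R.

End Defs.

Arguments L1 {R} m.
Arguments L2 {R} m.
Arguments Qprev {R} Q n x y.
Arguments gram {R m n} w u v.
Arguments Wt {R} a40 a22 a04 t x y.
Arguments is_MOPS {R} w Q.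

From HB Require Import structures.
From mathcomp Require Import all_boot all_order all_algebra.
From mathcomp Require Import all_classical all_reals all_analysis.
From mathcomp Require Import ring lra zify.
Import Order.TTheory GRing.Theory Num.Theory.
Import numFieldNormedType.Exports.
Set Implicit Arguments. Unset Strict Implicit. Unset Printing Implicit Defensive.
Local Open Scope classical_set_scope.
Local Open Scope ring_scope.

(* Fix t, put s = h + t, p = Q_n(s), q = Q_n(t) and r = x^2 + y^2, so that
   W_s = W_t e^(h r).  As p - q has degree < n, orthogonality for W_s gives
   H_n(s) = \int q q^T W_s + \int (p - q) q^T W_s, and the last integral vanishes
   when W_s is replaced by W_t.  A first-order expansion of e^(h r) shows that the
   first integral is H_n(t) + h \int r q q^T W_t + O(h^2).  For the second one, the
   same two orthogonality relations give \int (p - q)^2 W_s = -\int (p - q) q (W_s - W_t),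
   which AM-GM bounds by half of itself plus O(h^2); hence both \int (p - q)^2 W_s and
   the second integral are O(h^2).  So H_n is differentiable, without any regularity
   of Q_n in t, with derivative \int (x Q_n)(x Q_n)^T W_t + \int (y Q_n)(y Q_n)^T W_t,
   and the three-term relations together with orthogonality turn this into
   V_{n+1} H_n.  All integrands are polynomials, which are integrable because the
   entries of Q_0, ..., Q_{N-1} span the polynomials of degree < N. *)

Definition sqnorm (R : pzRingType) (x y : R) : R := x ^+ 2 + y ^+ 2.

Lemma sqnorm_ge0 (R : realDomainType) (x y : R) : 0 <= sqnorm x y.
Proof. by rewrite addr_ge0 ?sqr_ge0. Qed.

Section Span.
Variables (R : realType) (Q : forall n, R -> R -> 'cV[R]_n.+1).

Inductive Qspan (N : nat) : (R -> R -> R) -> Prop :=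
| Qspan0 : Qspan N (fun _ _ => 0)
| QspanQ m (k : 'I_m.+1) : (m < N)%N -> Qspan N (fun x y => Q m x y k 0)
| QspanD f g : Qspan N f -> Qspan N g -> Qspan N (fun x y => f x y + g x y)
| QspanZ c f : Qspan N f -> Qspan N (fun x y => c * f x y).

Definition Qspan_vec N m (u : R -> R -> 'cV[R]_m) : Prop :=
  forall k, Qspan N (fun x y => u x y k 0).

Lemma Qspan_eq N f g : Qspan N f -> f =2 g -> Qspan N g.
Proof. by move=> + /funeq2P <-. Qed.

Lemma QspanB N f g : Qspan N f -> Qspan N g -> Qspan N (fun x y => f x y - g x y).
Proof.
move=> hf hg; apply: (Qspan_eq (QspanD hf (QspanZ (-1) hg))) => x y.
by rewrite mulN1r.
Qed.

Lemma Qspan_sum N (I : Type) (r : seq I) (F : I -> R -> R -> R) :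
  (forall i, Qspan N (F i)) -> Qspan N (fun x y => \sum_(i <- r) F i x y).
Proof.
move=> hF; elim: r => [|i r IHr].
  by apply: (Qspan_eq (Qspan0 N)) => x y; rewrite big_nil.
by apply: (Qspan_eq (QspanD (hF i) IHr)) => x y; rewrite big_cons.
Qed.

Lemma Qspan_widen N M f : (N <= M)%N -> Qspan N f -> Qspan M f.
Proof.
move=> leNM; elim=> [|m k ltmN|f1 f2 _ h1 _ h2|c f1 _ h1].
- exact: Qspan0.
- exact/QspanQ/(leq_trans ltmN).
- exact: QspanD.
- exact: QspanZ.
Qed.

Lemma Qspan_vecQ N m : (m < N)%N -> Qspan_vec N (Q m).
Proof. by move=> ltmN k; apply: QspanQ. Qed.

Lemma Qspan_vec_prev m : Qspan_vec m (Qprev Q m).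
Proof. by case: m => [|m] k; [case: k | exact: QspanQ]. Qed.

Section Recurrence.
Variables (phi : R -> R -> R) (L : forall m, 'M[R]_(m, m.+1)).
Variable E : forall n, 'M[R]_(n.+1, n).
Hypothesis rec : forall n x y,
  phi x y *: Q n x y = L n.+1 *m Q n.+1 x y + E n *m Qprev Q n x y.

Lemma Qspan_mul N f : Qspan N f -> Qspan N.+1 (fun x y => phi x y * f x y).
Proof.
elim=> [|m k ltmN|f1 f2 _ h1 _ h2|c f1 _ h1].
- by apply: (Qspan_eq (Qspan0 _)) => x y; rewrite mulr0.
- have hrec : Qspan N.+1 (fun x y => \sum_j L m.+1 k j * Q m.+1 x y j 0
                                   + \sum_j E m k j * Qprev Q m x y j 0).
    apply: QspanD; apply: Qspan_sum => j; apply: QspanZ; first exact: QspanQ.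
    by apply: (Qspan_widen _ (Qspan_vec_prev j)); lia.
  apply: (Qspan_eq hrec) => x y.
  by have /matrixP/(_ k 0) := rec m x y; rewrite !mxE => ->.
- by apply: (Qspan_eq (QspanD h1 h2)) => x y; rewrite mulrDr.
- by apply: (Qspan_eq (QspanZ c h1)) => x y; rewrite mulrCA.
Qed.

Lemma Qspan_vec_scale N m (u : R -> R -> 'cV[R]_m) :
  Qspan_vec N u -> Qspan_vec N.+1 (fun x y => phi x y *: u x y).
Proof. by move=> hu k; apply: (Qspan_eq (Qspan_mul (hu k))) => x y; rewrite mxE. Qed.

End Recurrence.

Variables E1 E2 : forall n, 'M[R]_(n.+1, n).
Hypothesis recx : forall n x y,
  x *: Q n x y = L1 n.+1 *m Q n.+1 x y + E1 n *m Qprev Q n x y.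
Hypothesis recy : forall n x y,
  y *: Q n x y = L2 n.+1 *m Q n.+1 x y + E2 n *m Qprev Q n x y.
Hypothesis Q0_monic : monic_vec (Q 0).

Lemma Qspan_mul_sqnorm N f :
  Qspan N f -> Qspan N.+2 (fun x y => sqnorm x y * f x y).
Proof.
move=> hf; have hxx := Qspan_mul recx (Qspan_mul recx hf).
have hyy := Qspan_mul recy (Qspan_mul recy hf).
by apply: (Qspan_eq (QspanD hxx hyy)) => x y; rewrite /sqnorm; ring.
Qed.

Lemma Qspan_monomial i j : Qspan (i + j).+1 (fun x y => x ^+ i * y ^+ j).
Proof.
elim: i => [|i IHi]; last first.
  by apply: (Qspan_eq (Qspan_mul recx IHi)) => x y; rewrite exprS mulrA.
rewrite add0n; elim: j => [|j IHj].
  have [c hc] := Q0_monic.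
  apply: (Qspan_eq (QspanQ ord0 (ltnSn 0))) => x y.
  by rewrite hc big_ord0 addr0 /= !expr0 mulr1.
by apply: (Qspan_eq (Qspan_mul recy IHj)) => x y; rewrite !expr0 !mul1r exprS.
Qed.

Lemma Qspan_lower n (c : nat -> nat -> R) :
  Qspan n (fun x y => \sum_(i < n) \sum_(j < n - i) c i j * x ^+ i * y ^+ j).
Proof.
apply: Qspan_sum => i; apply: Qspan_sum => j.
have ltij : (i + j < n)%N by have := ltn_ord j; lia.
apply: (Qspan_eq (QspanZ (c i j) (Qspan_widen ltij (Qspan_monomial i j)))) => x y.
by rewrite mulrA.
Qed.

Lemma Qspan_monic n (q : R -> R -> 'cV[R]_n.+1) :
  monic_vec q -> Qspan_vec n.+1 q.
Proof.
case=> c hc k; apply: (Qspan_eq _ (fun x y => esym (hc x y k))).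
apply: QspanD; last exact: Qspan_widen (leqnSn n) (Qspan_lower n (c k)).
by have := Qspan_monomial (n - k) k; rewrite subnK // -ltnS.
Qed.

Lemma Qspan_monicB n (q1 q2 : R -> R -> 'cV[R]_n.+1) (k : 'I_n.+1) :
  monic_vec q1 -> monic_vec q2 -> Qspan n (fun x y => q1 x y k 0 - q2 x y k 0).
Proof.
case=> c1 h1 [c2 h2].
apply: (Qspan_eq (QspanB (Qspan_lower n (c1 k)) (Qspan_lower n (c2 k)))) => x y.
by rewrite h1 h2 opprD addrACA subrr add0r.
Qed.

End Span.

Section WeightedIntegral.
Variables (R : realType) (w : R -> R -> R).

Definition wint (f : R -> R -> R) : R :=
  Rintegral (@mu2 R) setT (fun z : R * R => f z.1 z.2 * w z.1 z.2).

Definition wintegrable (f : R -> R -> R) : Prop :=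
  (@mu2 R).-integrable setT (fun z : R * R => (f z.1 z.2 * w z.1 z.2)%:E).

Lemma wint_eq f g : f =2 g -> wint f = wint g.
Proof. by move/funeq2P->. Qed.

Lemma wintegrable_eq f g : wintegrable f -> f =2 g -> wintegrable g.
Proof. by move=> + /funeq2P <-. Qed.

Lemma wintegrable0 : wintegrable (fun _ _ => 0).
Proof.
apply: eq_integrable (integrable0 _ _) => // z _.
by rewrite mul0r.
Qed.

Lemma wint0 : wint (fun _ _ => 0) = 0.
Proof.
rewrite /wint (_ : (fun z => _) = cst 0) ?Rintegral_cst ?mul0r //.
by apply/funext => z; rewrite mul0r.
Qed.

Lemma wintegrableD f g :
  wintegrable f -> wintegrable g -> wintegrable (fun x y => f x y + g x y).
Proof.
move=> hf hg; apply: eq_integrable (integrableD measurableT hf hg) => // z _.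
by rewrite /= mulrDl.
Qed.

Lemma wintegrableZ c f : wintegrable f -> wintegrable (fun x y => c * f x y).
Proof.
move=> hf; apply: eq_integrable (integrableZl measurableT c hf) => // z _.
by rewrite /= -EFinM mulrA.
Qed.

Lemma wintegrableB f g :
  wintegrable f -> wintegrable g -> wintegrable (fun x y => f x y - g x y).
Proof.
move=> hf hg; apply: (wintegrable_eq (wintegrableD hf (wintegrableZ (-1) hg))).
by move=> x y; rewrite mulN1r.
Qed.

Lemma wintegrable_sum (I : Type) (r : seq I) (F : I -> R -> R -> R) :
  (forall i, wintegrable (F i)) -> wintegrable (fun x y => \sum_(i <- r) F i x y).
Proof.
move=> hF; elim: r => [|i r IHr].
  by apply: (wintegrable_eq wintegrable0) => x y; rewrite big_nil.
by apply: (wintegrable_eq (wintegrableD (hF i) IHr)) => x y; rewrite big_cons.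
Qed.

Lemma wintD f g : wintegrable f -> wintegrable g ->
  wint (fun x y => f x y + g x y) = wint f + wint g.
Proof.
by move=> hf hg; rewrite /wint -RintegralD //; apply: eq_Rintegral => z _; rewrite mulrDl.
Qed.

Lemma wintZ c f : wintegrable f -> wint (fun x y => c * f x y) = c * wint f.
Proof.
by move=> hf; rewrite /wint -RintegralZl //; apply: eq_Rintegral => z _; rewrite mulrA.
Qed.

Lemma wintB f g : wintegrable f -> wintegrable g ->
  wint (fun x y => f x y - g x y) = wint f - wint g.
Proof.
by move=> hf hg; rewrite /wint -RintegralB //; apply: eq_Rintegral => z _; rewrite mulrBl.
Qed.

Lemma wint_sum (I : Type) (r : seq I) (F : I -> R -> R -> R) :
  (forall i, wintegrable (F i)) ->
  wint (fun x y => \sum_(i <- r) F i x y) = \sum_(i <- r) wint (F i).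
Proof.
move=> hF; elim: r => [|i r IHr].
  by rewrite big_nil -[RHS]wint0; apply: wint_eq => x y; rewrite big_nil.
rewrite big_cons -IHr -wintD //; last exact: wintegrable_sum.
by apply: wint_eq => x y; rewrite big_cons.
Qed.

Hypothesis w_ge0 : forall x y, 0 <= w x y.

Lemma normr_wint_le f g : wintegrable f -> wintegrable g ->
  (forall x y, `|f x y| <= g x y) -> `|wint f| <= wint g.
Proof.
move=> hf hg hfg; apply: le_trans (le_normr_Rintegral measurableT hf) _.
apply: le_Rintegral => //; first exact: integrable_norm hf.
by move=> z _; rewrite normrM (ger0_norm (w_ge0 _ _)) ler_wpM2r.
Qed.

End WeightedIntegral.

Section Gram.
Variables (R : realType) (w : R -> R -> R).

Definition gram_integrable m n (u : R -> R -> 'cV[R]_m) (v : R -> R -> 'cV[R]_n) :=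
  forall i j, wintegrable w (fun x y => u x y i 0 * v x y j 0).

Lemma gramE m n (u : R -> R -> 'cV[R]_m) (v : R -> R -> 'cV[R]_n) i j :
  gram w u v i j = wint w (fun x y => u x y i 0 * v x y j 0).
Proof. by rewrite mxE. Qed.

Lemma gram_integrable_mulmxl p m n (A : 'M[R]_(p, m)) u (v : R -> R -> 'cV[R]_n) :
  gram_integrable u v -> gram_integrable (fun x y => A *m u x y) v.
Proof.
move=> huv i j; apply: (wintegrable_eq (wintegrable_sum (index_enum _)
  (fun k => wintegrableZ (A i k) (huv k j)))) => x y.
by rewrite mxE big_distrl; apply: eq_bigr => k _; rewrite mulrA.
Qed.

Lemma gram_mulmxl p m n (A : 'M[R]_(p, m)) u (v : R -> R -> 'cV[R]_n) :
  gram_integrable u v -> gram w (fun x y => A *m u x y) v = A *m gram w u v.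
Proof.
move=> huv; apply/matrixP => i j; rewrite gramE !mxE.
rewrite (@wint_eq _ _ _ (fun x y => \sum_k A i k * (u x y k 0 * v x y j 0))).
  rewrite wint_sum => [|k]; last exact: wintegrableZ.
  by apply: eq_bigr => k _; rewrite wintZ // -gramE.
by move=> x y; rewrite mxE big_distrl; apply: eq_bigr => k _; rewrite mulrA.
Qed.

Lemma gramDl m n (u1 u2 : R -> R -> 'cV[R]_m) (v : R -> R -> 'cV[R]_n) :
  gram_integrable u1 v -> gram_integrable u2 v ->
  gram w (fun x y => u1 x y + u2 x y) v = gram w u1 v + gram w u2 v.
Proof.
move=> h1 h2; apply/matrixP => i j; rewrite [RHS]mxE !gramE -wintD //.
by apply: wint_eq => x y; rewrite mxE mulrDl.
Qed.

Lemma gram_scale_move m n (phi : R -> R -> R) (u : R -> R -> 'cV[R]_m)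
    (v : R -> R -> 'cV[R]_n) :
  gram w (fun x y => phi x y *: u x y) v = gram w u (fun x y => phi x y *: v x y).
Proof.
apply/matrixP => i j; rewrite !gramE.
by apply: wint_eq => x y; rewrite !mxE mulrCA mulrA.
Qed.

End Gram.

Section Orthogonality.
Variables (R : realType) (w : R -> R -> R) (Q : forall n, R -> R -> 'cV[R]_n.+1).
Hypothesis Q_MOPS : is_MOPS w Q.

Lemma wintegrable_span N M f g : Qspan Q N f -> Qspan Q M g ->
  wintegrable w (fun x y => f x y * g x y).
Proof.
have mul0 h : wintegrable w (fun x y => 0 * h x y).
  by apply: (wintegrable_eq (wintegrable0 w)) => x y; rewrite mul0r.
move=> hf hg; elim: hf => [|m i _|f1 f2 _ h1 _ h2|c f1 _ h1].
- exact: mul0.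
- elim: hg => [|n j _|g1 g2 _ h1 _ h2|c g1 _ h1].
  + by apply: (wintegrable_eq (mul0 (fun _ _ => 0))) => x y; rewrite !mulr0.
  + by case: Q_MOPS => _ + _ _; apply.
  + by apply: (wintegrable_eq (wintegrableD h1 h2)) => x y; rewrite mulrDr.
  + by apply: (wintegrable_eq (wintegrableZ c h1)) => x y; rewrite mulrCA.
- by apply: (wintegrable_eq (wintegrableD h1 h2)) => x y; rewrite mulrDl.
- by apply: (wintegrable_eq (wintegrableZ c h1)) => x y; rewrite mulrA.
Qed.

Lemma gram_integrable_span N M m n (u : R -> R -> 'cV[R]_m) (v : R -> R -> 'cV[R]_n) :
  Qspan_vec Q N u -> Qspan_vec Q M v -> gram_integrable w u v.
Proof. by move=> hu hv i j; exact: wintegrable_span (hu i) (hv j). Qed.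

Lemma gram_QQ m n : m <> n -> gram w (Q m) (Q n) = 0.
Proof. by case: Q_MOPS => _ _ + _; apply. Qed.

Lemma gram_prev_Q m n : m <> n.+1 -> gram w (Qprev Q m) (Q n) = 0.
Proof. by case: m => [_|m hmn]; [exact: flatmx0 | apply: gram_QQ => /(congr1 S)]. Qed.

Lemma wint_Q_span_eq0 n (k : 'I_n.+1) f :
  Qspan Q n f -> wint w (fun x y => Q n x y k 0 * f x y) = 0.
Proof.
have hQ := wintegrable_span (QspanQ Q k (ltnSn n)).
elim=> [|m j ltmn|f1 f2 s1 h1 s2 h2|c f1 s1 h1].
- by rewrite -[RHS](wint0 w); apply: wint_eq => x y; rewrite mulr0.
- by rewrite -gramE gram_QQ ?mxE // => eqmn; rewrite eqmn ltnn in ltmn.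
- rewrite (@wint_eq _ _ _ (fun x y => Q n x y k 0 * f1 x y + Q n x y k 0 * f2 x y)).
    by rewrite (wintD (hQ _ _ s1) (hQ _ _ s2)) h1 h2 addr0.
  by move=> x y; rewrite mulrDr.
- rewrite (@wint_eq _ _ _ (fun x y => c * (Q n x y k 0 * f1 x y))).
    by rewrite (wintZ _ (hQ _ _ s1)) h1 mulr0.
  by move=> x y; rewrite mulrCA.
Qed.

Section GramRecurrence.
Variables (phi : R -> R -> R) (L : forall m, 'M[R]_(m, m.+1)).
Variable E : forall n, 'M[R]_(n.+1, n).
Hypothesis rec : forall n x y,
  phi x y *: Q n x y = L n.+1 *m Q n.+1 x y + E n *m Qprev Q n x y.

Lemma gram_rec_sqr n :
  gram w (fun x y => phi x y *: Q n x y) (fun x y => phi x y *: Q n x y)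
  = (L n.+1 *m E n.+1 + E n *m L n) *m gram w (Q n) (Q n).
Proof.
have recE m : (fun x y => phi x y *: Q m x y)
              = (fun x y => L m.+1 *m Q m.+1 x y + E m *m Qprev Q m x y).
  by apply/funeq2P => x y; exact: rec.
have gram_rec m p (v : R -> R -> 'cV[R]_p) N : Qspan_vec Q N v ->
    gram w (fun x y => phi x y *: Q m x y) v
    = L m.+1 *m gram w (Q m.+1) v + E m *m gram w (Qprev Q m) v.
  move=> hv; have hQ := gram_integrable_span (Qspan_vecQ Q (ltnSn m.+1)) hv.
  have hP := gram_integrable_span (@Qspan_vec_prev _ Q m) hv.
  by rewrite recE gramDl ?gram_mulmxl //; exact: gram_integrable_mulmxl.
have hQn := Qspan_vec_scale rec (Qspan_vecQ Q (ltnSn n)).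
rewrite {1}(gram_rec n _ _ _ hQn) -!gram_scale_move.
rewrite (gram_rec n.+1 _ _ _ (Qspan_vecQ Q (ltnSn n))) gram_QQ; last by lia.
rewrite mulmx0 add0r.
case: n hQn => [|n] hQn; first by rewrite (thinmx0 (E 0)) !mul0mx !addr0 mulmxA.
rewrite (gram_rec n _ _ _ (Qspan_vecQ Q (ltnSn n.+1))).
rewrite [gram w (Qprev Q n) _]gram_prev_Q; last by lia.
by rewrite mulmx0 addr0 mulmxDl !mulmxA.
Qed.

End GramRecurrence.

End Orthogonality.

Section ExpBounds.
Variable R : realType.
Implicit Types a b d h r v : R.

Lemma expR_mul1B_le1 v : expR v * (1 - v) <= 1.
Proof.
have := ler_wpM2l (expR_ge0 v) (expR_ge1Dx (- v)).
by rewrite expRN mulfV ?gt_eqF ?expR_gt0.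
Qed.

Lemma expR_sub1_sub_le v : `|expR v - 1 - v| <= v ^+ 2 * expR `|v|.
Proof.
have e0 := expR_gt0 v; have e1 := expR_ge1Dx v; have e2 := expR_mul1B_le1 v.
have [v0|v0] := leP 0 v.
  have e3 : 1 + v <= expR `|v| by rewrite ger0_norm //; exact: expR_ge1Dx.
  by rewrite !ger0_norm //; nra.
have e3 : 1 - v <= expR `|v| by rewrite ltr0_norm //; exact: expR_ge1Dx.
rewrite ger0_norm; last lra.
have : expR v - 1 - v <= v ^+ 2 by nra.
nra.
Qed.

Lemma expR_sub1_le v : `|expR v - 1| <= `|v| * expR `|v|.
Proof.
have e0 := expR_gt0 v; have e1 := expR_ge1Dx v; have e2 := expR_mul1B_le1 v.
have [v0|v0] := leP 0 v.
  by rewrite !ger0_norm //; nra.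
have e3 : 1 - v <= expR `|v| by rewrite ltr0_norm //; exact: expR_ge1Dx.
rewrite ler0_norm; last by rewrite subr_le0 -expR0 ler_expR ltW.
by rewrite ltr0_norm // in e3 *; nra.
Qed.

Lemma expR_sub1_sqr_div_le v : (expR v - 1) ^+ 2 / expR v <= v ^+ 2 * expR (3 * `|v|).
Proof.
set E := expR `|v|.
have hinv : (expR v)^-1 <= E by rewrite -expRN ler_expR -normrN ler_norm.
have hsq : (expR v - 1) ^+ 2 <= (`|v| * E) ^+ 2.
  rewrite -real_normK ?num_real // lerXn2r ?nnegrE ?mulr_ge0 ?expR_ge0 //.
  exact: expR_sub1_le.
have -> : expR (3 * `|v|) = E ^+ 2 * E by rewrite /E expr2 -!expRD; congr expR; ring.
rewrite mulrA -(real_normK (num_real v)) -exprMn.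
by apply: ler_pM; rewrite ?sqr_ge0 ?invr_ge0 ?expR_ge0.
Qed.

Lemma normrM_le_AMGM a b e : 0 < e -> `|a * b| <= 2^-1 * (a ^+ 2 * e + b ^+ 2 / e).
Proof.
move=> e0; rewrite ler_norml; apply/andP; split.
- have : 0 <= (a * e + b) ^+ 2 / e by rewrite divr_ge0 ?sqr_ge0 ?ltW.
  have -> : (a * e + b) ^+ 2 / e = a ^+ 2 * e + 2 * (a * b) + b ^+ 2 / e.
    by field; rewrite gt_eqF.
  lra.
- have : 0 <= (a * e - b) ^+ 2 / e by rewrite divr_ge0 ?sqr_ge0 ?ltW.
  have -> : (a * e - b) ^+ 2 / e = a ^+ 2 * e - 2 * (a * b) + b ^+ 2 / e.
    by field; rewrite gt_eqF.
  lra.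
Qed.

Lemma expR_taylor_prod_le a b h r : `|h| <= 1 -> 0 <= r ->
  `|a * b * expR (h * r) - a * b - h * (r * (a * b))|
  <= 2^-1 * h ^+ 2 * ((r * a) ^+ 2 * expR (3 * r) + (r * b) ^+ 2 * expR (3 * r)).
Proof.
move=> h1 r0.
have hab := normrM_le_AMGM a b ltr01; rewrite mulr1 divr1 in hab.
have hT : `|expR (h * r) - 1 - h * r| <= (h * r) ^+ 2 * expR (3 * r).
  apply: le_trans (expR_sub1_sub_le _) _; rewrite ler_wpM2l ?sqr_ge0 // ler_expR.
  by rewrite normrM (ger0_norm r0); nra.
have -> : a * b * expR (h * r) - a * b - h * (r * (a * b))
          = a * b * (expR (h * r) - 1 - h * r) by ring.
have -> : 2^-1 * h ^+ 2 * ((r * a) ^+ 2 * expR (3 * r) + (r * b) ^+ 2 * expR (3 * r))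
          = 2^-1 * (a ^+ 2 + b ^+ 2) * ((h * r) ^+ 2 * expR (3 * r)) by ring.
by rewrite normrM; apply: ler_pM (normr_ge0 _) (normr_ge0 _) hab hT.
Qed.

Lemma expR_diff_prod_le d b h r : `|h| <= 1 -> 0 <= r ->
  `|d * b * expR (h * r) - d * b|
  <= 2^-1 * (d ^+ 2 * expR (h * r)) + 2^-1 * h ^+ 2 * ((r * b) ^+ 2 * expR (3 * r)).
Proof.
move=> h1 r0; have e0 := expR_gt0 (h * r).
have hq : (expR (h * r) - 1) ^+ 2 / expR (h * r) <= (h * r) ^+ 2 * expR (3 * r).
  apply: le_trans (expR_sub1_sqr_div_le _) _; rewrite ler_wpM2l ?sqr_ge0 // ler_expR.
  by rewrite normrM (ger0_norm r0); nra.
have -> : d * b * expR (h * r) - d * b = d * (b * (expR (h * r) - 1)) by ring.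
apply: le_trans (normrM_le_AMGM _ _ e0) _.
have -> : 2^-1 * h ^+ 2 * ((r * b) ^+ 2 * expR (3 * r))
          = 2^-1 * b ^+ 2 * ((h * r) ^+ 2 * expR (3 * r)) by ring.
have -> : 2^-1 * (d ^+ 2 * expR (h * r) + (b * (expR (h * r) - 1)) ^+ 2 / expR (h * r))
          = 2^-1 * (d ^+ 2 * expR (h * r))
            + 2^-1 * b ^+ 2 * ((expR (h * r) - 1) ^+ 2 / expR (h * r)) by ring.
rewrite lerD2l; apply: ler_wpM2l => //.
by rewrite mulr_ge0 ?sqr_ge0 // invr_ge0 ler0n.
Qed.

End ExpBounds.

Lemma derivable_quadratic_remainder (R : realType) (F : R -> R) (t M C : R) :
  (forall h, `|h| <= 1 -> `|F (h + t) - F t - h * M| <= C * h ^+ 2) ->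
  derivable F t 1 /\ derive1 F t = M.
Proof.
move=> hF.
have C0 : 0 <= C.
  by have := hF 1; rewrite normr1 lexx expr1n mulr1 => /(_ isT); apply: le_trans.
have cvF : (fun h : R => h^-1 *: (F (h + t) - F t)) @ 0^' --> M.
  apply/cvgrPdist_le => e e0.
  have d0 : 0 < Num.min 1 (e / (C + 1)) by rewrite lt_min ltr01 divr_gt0 // ltr_wpDl.
  exists (Num.min 1 (e / (C + 1))) => //= h /= hd hn0.
  rewrite sub0r normrN lt_min in hd; case/andP: hd => h1 he.
  have := hF h (ltW h1).
  have -> : M - h^-1 *: (F (h + t) - F t) = - h^-1 * (F (h + t) - F t - h * M).
    by rewrite /GRing.scale /=; field.
  rewrite normrM normrN normrV ?unitfE // ler_pdivrMl ?normr_gt0 // => hle.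
  apply: le_trans hle _.
  have ha : `|h| * (C + 1) <= e by rewrite -ler_pdivlMr ?ltW // ltr_wpDl.
  rewrite -(real_normK (num_real h)).
  have := normr_ge0 h.
  nra.
split; last exact: cvg_lim.
rewrite /derivable (_ : (fun h : R => h^-1 *: ((F \o shift t) (h *: 1) - F t))
                        = (fun h : R => h^-1 *: (F (h + t) - F t))).
  exact: cvgP cvF.
by apply/funext => h /=; rewrite /GRing.scale /= mulr1.
Qed.

Section TiltedFamily.
Variables (R : realType) (w : R -> R -> R -> R).
Hypothesis w_ge0 : forall t x y, 0 <= w t x y.
Hypothesis wD : forall h t x y, w (h + t) x y = w t x y * expR (h * sqnorm x y).

Lemma wint_tilt h t f :
  wint (w (h + t)) f = wint (w t) (fun x y => f x y * expR (h * sqnorm x y)).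
Proof. by rewrite /wint; apply: eq_Rintegral => z _; rewrite wD mulrA mulrAC. Qed.

Lemma wintegrable_tilt h t f : wintegrable (w (h + t)) f ->
  wintegrable (w t) (fun x y => f x y * expR (h * sqnorm x y)).
Proof. by apply: eq_integrable => // z _; rewrite /= wD mulrA mulrAC. Qed.

(* For |h| <= 1 the factor e^(3 |h| r) produced by the remainder estimates is
   absorbed by passing from W_t to W_(3+t). *)
Lemma wint_tilt_taylor h t a b : `|h| <= 1 ->
  wintegrable (w (h + t)) (fun x y => a x y * b x y) ->
  wintegrable (w t) (fun x y => a x y * b x y) ->
  wintegrable (w t) (fun x y => sqnorm x y * (a x y * b x y)) ->
  wintegrable (w (3 + t)) (fun x y => (sqnorm x y * a x y) ^+ 2) ->
  wintegrable (w (3 + t)) (fun x y => (sqnorm x y * b x y) ^+ 2) ->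
  `|wint (w (h + t)) (fun x y => a x y * b x y) - wint (w t) (fun x y => a x y * b x y)
    - h * wint (w t) (fun x y => sqnorm x y * (a x y * b x y))|
  <= 2^-1 * h ^+ 2 * (wint (w (3 + t)) (fun x y => (sqnorm x y * a x y) ^+ 2)
                     + wint (w (3 + t)) (fun x y => (sqnorm x y * b x y) ^+ 2)).
Proof.
move=> h1 /wintegrable_tilt i1 i2 i3 /wintegrable_tilt i4 /wintegrable_tilt i5.
rewrite !wint_tilt -(wintZ h i3) -(wintB i1 i2).
rewrite -(wintB (wintegrableB i1 i2) (wintegrableZ h i3)).
rewrite -(wintD i4 i5) -(wintZ _ (wintegrableD i4 i5)).
apply: normr_wint_le => [|||x y]; first exact: w_ge0.
- exact: wintegrableB (wintegrableB i1 i2) (wintegrableZ h i3).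
- exact: wintegrableZ (wintegrableD i4 i5).
- exact: expR_taylor_prod_le h1 (sqnorm_ge0 x y).
Qed.

Lemma wint_tilt_diff h t d b : `|h| <= 1 ->
  wintegrable (w (h + t)) (fun x y => d x y * b x y) ->
  wintegrable (w t) (fun x y => d x y * b x y) ->
  wintegrable (w (h + t)) (fun x y => d x y ^+ 2) ->
  wintegrable (w (3 + t)) (fun x y => (sqnorm x y * b x y) ^+ 2) ->
  `|wint (w (h + t)) (fun x y => d x y * b x y) - wint (w t) (fun x y => d x y * b x y)|
  <= 2^-1 * wint (w (h + t)) (fun x y => d x y ^+ 2)
     + 2^-1 * h ^+ 2 * wint (w (3 + t)) (fun x y => (sqnorm x y * b x y) ^+ 2).
Proof.
move=> h1 /wintegrable_tilt i1 i2 /wintegrable_tilt i3 /wintegrable_tilt i4.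
rewrite !wint_tilt -(wintB i1 i2) -(wintZ _ i3) -(wintZ _ i4).
rewrite -(wintD (wintegrableZ _ i3) (wintegrableZ _ i4)).
apply: normr_wint_le => [|||x y]; first exact: w_ge0.
- exact: wintegrableB i1 i2.
- exact: wintegrableD (wintegrableZ _ i3) (wintegrableZ _ i4).
- exact: expR_diff_prod_le h1 (sqnorm_ge0 x y).
Qed.

Section MOPS.
Variable Q : R -> forall n, R -> R -> 'cV[R]_n.+1.
Variables E1 E2 : R -> forall n, 'M[R]_(n.+1, n).
Hypothesis Q_MOPS : forall t, is_MOPS (w t) (Q t).
Hypothesis recx : forall t n x y,
  x *: Q t n x y = L1 n.+1 *m Q t n.+1 x y + E1 t n *m Qprev (Q t) n x y.
Hypothesis recy : forall t n x y,
  y *: Q t n x y = L2 n.+1 *m Q t n.+1 x y + E2 t n *m Qprev (Q t) n x y.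

Lemma monic_Q u m : monic_vec (Q u m).
Proof. by case: (Q_MOPS u). Qed.

Variables (t : R) (n : nat).

Lemma Qspan_entry u s k : Qspan (Q u) n.+1 (fun x y => Q s n x y k 0).
Proof. exact: (Qspan_monic (recx u) (recy u) (monic_Q u 0) (monic_Q s n) k). Qed.

Lemma Qspan_entryB u s k :
  Qspan (Q u) n (fun x y => Q s n x y k 0 - Q t n x y k 0).
Proof.
exact: (Qspan_monicB (recx u) (recy u) (monic_Q u 0) k (monic_Q s n) (monic_Q t n)).
Qed.

Lemma wintegrable_sqr_entryB u s k :
  wintegrable (w u) (fun x y => (Q s n x y k 0 - Q t n x y k 0) ^+ 2).
Proof.
have hd := Qspan_entryB u s k.
by apply: (wintegrable_eq (wintegrable_span (Q_MOPS u) hd hd)) => x y; rewrite expr2.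
Qed.

Lemma wintegrable_sqnorm_entries u i j :
  wintegrable (w u) (fun x y => sqnorm x y * (Q t n x y i 0 * Q t n x y j 0)).
Proof.
have hi := Qspan_mul_sqnorm (recx u) (recy u) (Qspan_entry u t i).
apply: (wintegrable_eq (wintegrable_span (Q_MOPS u) hi (Qspan_entry u t j))) => x y.
by rewrite mulrA.
Qed.

Lemma wintegrable_sqnorm_entry_sqr u k :
  wintegrable (w u) (fun x y => (sqnorm x y * Q t n x y k 0) ^+ 2).
Proof.
have hk := Qspan_mul_sqnorm (recx u) (recy u) (Qspan_entry u t k).
by apply: (wintegrable_eq (wintegrable_span (Q_MOPS u) hk hk)) => x y; rewrite expr2.
Qed.

Lemma wint_entryB_Q_eq0 s k l :
  wint (w t) (fun x y => (Q s n x y k 0 - Q t n x y k 0) * Q t n x y l 0) = 0.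
Proof.
rewrite -(wint_Q_span_eq0 (Q_MOPS t) l (Qspan_entryB t s k)).
by apply: wint_eq => x y; rewrite mulrC.
Qed.

Lemma gram_tilt_split s i j :
  gram (w s) (Q s n) (Q s n) i j
  = wint (w s) (fun x y => Q t n x y i 0 * Q t n x y j 0)
    + wint (w s) (fun x y => (Q s n x y i 0 - Q t n x y i 0) * Q t n x y j 0).
Proof.
have hp k := Qspan_entry s s k; have hq k := Qspan_entry s t k.
have hd k := Qspan_widen (leqnSn n) (Qspan_entryB s s k).
rewrite gramE -[LHS]subr0 -(wint_Q_span_eq0 (Q_MOPS s) i (Qspan_entryB s s j)).
rewrite -(wintB (wintegrable_span (Q_MOPS s) (hp i) (hp j))
                (wintegrable_span (Q_MOPS s) (hp i) (hd j))).
rewrite -(wintD (wintegrable_span (Q_MOPS s) (hq i) (hq j))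
                (wintegrable_span (Q_MOPS s) (hd i) (hq j))).
by apply: wint_eq => x y; ring.
Qed.

Let K k := wint (w (3 + t)) (fun x y => (sqnorm x y * Q t n x y k 0) ^+ 2).

Lemma wint_sqr_entryB_le h k : `|h| <= 1 ->
  wint (w (h + t)) (fun x y => (Q (h + t) n x y k 0 - Q t n x y k 0) ^+ 2)
  <= h ^+ 2 * K k.
Proof.
move=> h1; set s := h + t.
have hd := Qspan_entryB s s k; have hd' := Qspan_widen (leqnSn n) hd.
have hdq := wintegrable_span (Q_MOPS s) hd' (Qspan_entry s t k).
have hX : wint (w s) (fun x y => (Q s n x y k 0 - Q t n x y k 0) ^+ 2)
          = - wint (w s) (fun x y => (Q s n x y k 0 - Q t n x y k 0) * Q t n x y k 0).
  rewrite -[RHS]sub0r -(wint_Q_span_eq0 (Q_MOPS s) k hd).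
  rewrite -(wintB (wintegrable_span (Q_MOPS s) (Qspan_entry s s k) hd') hdq).
  by apply: wint_eq => x y; ring.
have hdq_t := wintegrable_span (Q_MOPS t)
  (Qspan_widen (leqnSn n) (Qspan_entryB t s k)) (Qspan_entry t t k).
have := wint_tilt_diff h1 hdq hdq_t (wintegrable_sqr_entryB s s k)
  (wintegrable_sqnorm_entry_sqr _ k).
rewrite wint_entryB_Q_eq0 subr0 -/s -/(K k).
have := ler_norm (- wint (w s)
  (fun x y => (Q s n x y k 0 - Q t n x y k 0) * Q t n x y k 0)).
rewrite normrN -hX.
lra.
Qed.

Lemma gram_tilt_taylor i j h : `|h| <= 1 ->
  `|gram (w (h + t)) (Q (h + t) n) (Q (h + t) n) i j - gram (w t) (Q t n) (Q t n) i j
    - h * wint (w t) (fun x y => sqnorm x y * (Q t n x y i 0 * Q t n x y j 0))|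
  <= (K i + K j) * h ^+ 2.
Proof.
move=> h1; set s := h + t.
have hq k := Qspan_entry s t k; have hq' k := Qspan_entry t t k.
have hA := wint_tilt_taylor h1 (wintegrable_span (Q_MOPS s) (hq i) (hq j))
  (wintegrable_span (Q_MOPS t) (hq' i) (hq' j)) (wintegrable_sqnorm_entries t i j)
  (wintegrable_sqnorm_entry_sqr _ i) (wintegrable_sqnorm_entry_sqr _ j).
have hB := wint_tilt_diff h1
  (wintegrable_span (Q_MOPS s) (Qspan_widen (leqnSn n) (Qspan_entryB s s i)) (hq j))
  (wintegrable_span (Q_MOPS t) (Qspan_widen (leqnSn n) (Qspan_entryB t s i)) (hq' j))
  (wintegrable_sqr_entryB s s i) (wintegrable_sqnorm_entry_sqr _ j).
have hX := wint_sqr_entryB_le i h1.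
rewrite wint_entryB_Q_eq0 subr0 -/s -/(K j) in hB.
rewrite -/s -/(K i) -/(K j) in hA hX.
rewrite gram_tilt_split gramE ler_norml.
move: hA hB; rewrite !ler_norml => /andP[hA1 hA2] /andP[hB1 hB2].
apply/andP; split; lra.
Qed.

Lemma wint_sqnorm_gram i j :
  wint (w t) (fun x y => sqnorm x y * (Q t n x y i 0 * Q t n x y j 0))
  = ((L1 n.+1 *m E1 t n.+1 + L2 n.+1 *m E2 t n.+1 + E1 t n *m L1 n + E2 t n *m L2 n)
     *m gram (w t) (Q t n) (Q t n)) i j.
Proof.
have hQ := Qspan_vecQ (Q t) (ltnSn n).
have hx := gram_integrable_span (Q_MOPS t) (Qspan_vec_scale (recx t) hQ)
                                            (Qspan_vec_scale (recx t) hQ).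
have hy := gram_integrable_span (Q_MOPS t) (Qspan_vec_scale (recy t) hQ)
                                            (Qspan_vec_scale (recy t) hQ).
rewrite -addrA addrACA mulmxDl -(gram_rec_sqr (Q_MOPS t) (recx t)).
rewrite -(gram_rec_sqr (Q_MOPS t) (recy t)) mxE !gramE -(wintD (hx i j) (hy i j)).
by apply: wint_eq => x y; rewrite !mxE /sqnorm; ring.
Qed.

Lemma gram_tilt_derive i j :
  derivable (fun s => gram (w s) (Q s n) (Q s n) i j) t 1 /\
  derive1 (fun s => gram (w s) (Q s n) (Q s n) i j) t
  = ((L1 n.+1 *m E1 t n.+1 + L2 n.+1 *m E2 t n.+1 + E1 t n *m L1 n + E2 t n *m L2 n)
     *m gram (w t) (Q t n) (Q t n)) i j.
Proof.
rewrite -wint_sqnorm_gram.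
exact: derivable_quadratic_remainder (gram_tilt_taylor i j).
Qed.

End MOPS.

End TiltedFamily.

Lemma Wt_ge0 (R : realType) (a40 a22 a04 t x y : R) : 0 <= Wt a40 a22 a04 t x y.
Proof. exact: expR_ge0. Qed.

Lemma WtD (R : realType) (a40 a22 a04 h t x y : R) :
  Wt a40 a22 a04 (h + t) x y = Wt a40 a22 a04 t x y * expR (h * sqnorm x y).
Proof. by rewrite /Wt /sqnorm -expRD; congr expR; ring. Qed.

Unset Implicit Arguments.

Theorem lemma6p1 (R : realType) (a40 a22 a04 : R)
  (Q : R -> forall n, R -> R -> 'cV[R]_n.+1)
  (E1 E2 : R -> forall n, 'M[R]_(n.+1, n)) :
  0 <= a40 -> 0 <= a22 -> 0 <= a04 -> 0 < a40 + a22 -> 0 < a22 + a04 ->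
  (forall t, is_MOPS (Wt a40 a22 a04 t) (Q t)) ->
  (forall t n x y,
      x *: Q t n x y = L1 n.+1 *m Q t n.+1 x y + E1 t n *m Qprev (Q t) n x y) ->
  (forall t n x y,
      y *: Q t n x y = L2 n.+1 *m Q t n.+1 x y + E2 t n *m Qprev (Q t) n x y) ->
  let H := fun t n => gram (Wt a40 a22 a04 t) (Q t n) (Q t n) in
  let V := fun t n => L1 n.+1 *m E1 t n.+1 + L2 n.+1 *m E2 t n.+1
                      + E1 t n *m L1 n + E2 t n *m L2 n in
  forall (n : nat) (t : R) (i j : 'I_n.+1),
    derivable (fun s => H s n i j) t 1 /\
    derive1 (fun s => H s n i j) t = (V t n *m H t n) i j.
Proof.
(* The conditions on the coefficients only make W_t integrable against
   polynomials, which is already part of is_MOPS. *)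
move=> _ _ _ _ _ Q_MOPS recx recy H V n t i j.
exact: (gram_tilt_derive (@Wt_ge0 R a40 a22 a04) (@WtD R a40 a22 a04)
          Q_MOPS recx recy t i j).
Qed.
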